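(* Let $r\ge5$, let $A$ be an independent set in $G(n,r,1)$, let $A_0=\{v_1,\dots,v_k\}$, $I_0$, $A_1$, $P$ be as in the context, and fix $x\in[n]\setminus(I_0\cup P)$. For $i=1,\dots,k$ let $B_i=\{v\in A_1: x\in v,\ v\cap v_i\ne\emptyset\}$, and for each $v\in B_i$ let $f(v)=v\setminus\{x,y,z\}$ where $y,z$ are two (arbitrarily chosen) distinct elements of $v\cap v_i$. Let $\omega=r^5\binom{n}{r-5}$. If $i\ne j$, $B_i\ne\emptyset$ and $|B_j|\ge\omega$, then $f(u_1)\cap f(u_2)\ne\emptyset$ for all $u_1,u_2\in B_i$.
   Context: $G(n,r,1)$ is the graph on $[n]^{(r)}$ in which two $r$-subsets are adjacent iff they intersect in exactly one element; members of an independent set pairwise intersect in $0$ or at least $2$ elements, so each $v\in B_i$ has $|v\cap v_i|\ge2$. $A_0=\{v_1,\dots,v_k\}\subset A$ is a subfamily of pairwise disjoint sets of maximum cardinality, $I_0=v_1\cup\dots\cup v_k$, $A_1$ is the set of $v\in A\setminus A_0$ intersecting exactly one $v_i$. Distinct elements $x,y$ are joint if every $v\in A_1$ satisfies $|v\cap\{x,y\}|\ne1$; $P$ is the set of elements of $[n]\setminus I_0$ joint with some other element of $[n]\setminus I_0$. *)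

From mathcomp Require Import all_boot.
Set Implicit Arguments. Unset Strict Implicit. Unset Printing Implicit Defensive.

Section Defs.
Variable n : nat.
Notation fam := {set {set 'I_n}}.

Definition r_uniform (r : nat) (A : fam) := forall v, v \in A -> #|v| = r.

(* independent set in G(n,r,1): distinct members never meet in exactly one element *)
Definition independent_nr1 (A : fam) :=
  forall u w, u \in A -> w \in A -> u != w -> #|u :&: w| != 1.

Definition pw_disjoint (F : fam) :=
  forall u w, u \in F -> w \in F -> u != w -> [disjoint u & w].

Definition max_disjoint_subfamily (A A0 : fam) :=
  [/\ A0 \subset A, pw_disjoint A0 &
      forall F : fam, F \subset A -> pw_disjoint F -> #|F| <= #|A0|].

Definition I0 (A0 : fam) : {set 'I_n} := \bigcup_(v in A0) v.

Definition A1 (A A0 : fam) : fam :=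
  [set v in A :\: A0 | #|[set w in A0 | ~~ [disjoint v & w]]| == 1].

Definition joint (A A0 : fam) (x y : 'I_n) :=
  x != y /\ forall v, v \in A1 A A0 -> #|v :&: [set x; y]| != 1.

Definition inP (A A0 : fam) (x : 'I_n) :=
  x \notin I0 A0 /\ exists y, y \notin I0 A0 /\ joint A A0 x y.

Definition Bset (A A0 : fam) (x : 'I_n) (vi : {set 'I_n}) : fam :=
  [set v in A1 A A0 | (x \in v) && ~~ [disjoint v & vi]].
End Defs.

From mathcomp Require Import all_boot.

(* Suppose f u1 and f u2 are disjoint. Every w in B_j contains x, meets v_j
   in two points a, b (independence), and meets each u_l in a point other
   than x, necessarily outside v_i since w avoids v_i; such a point lies in
   f u_l.  So w contains a 5-set {x, a, b, c, d} with a, b in v_j, c in f u1,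
   d in f u2, and w is determined by (a, b, c, d) together with the
   (r - 5)-set w minus it.  Hence |B_j| <= r^4 C(n, r - 5) < omega. *)

Set Implicit Arguments. Unset Strict Implicit.

Lemma card_le_marked (T K : finType) (W : {set {set T}}) (Q : {set K})
    (mark : K -> {set T}) m k :
  (forall w, w \in W -> #|w| = m) ->
  (forall w, w \in W ->
     exists2 q, q \in Q & (mark q \subset w) && (#|mark q| == k)) ->
  #|W| <= #|Q| * 'C(#|T|, m - k).
Proof.
move=> cardW markW; have [-> | [w0 /markW[q0 _ _]]] := set_0Vmem W.
  by rewrite cards0.
pose good (w : {set T}) q := [&& q \in Q, mark q \subset w & #|mark q| == k].
pose q_of w := odflt q0 [pick q | good w q].
have goodW w : w \in W -> good w (q_of w).
  move=> /markW[q Qq /andP[sub_w card_q]]; rewrite /q_of.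
  by case: pickP => [q' //|/(_ q)]; rewrite /good Qq sub_w card_q.
pose g w := (q_of w, w :\: mark (q_of w)).
have inj_g : {in W &, injective g}.
  move=> w1 w2 /goodW/and3P[_ sub1 _] /goodW/and3P[_ sub2 _] [eq_q eq_rest].
  by rewrite -(setID w1 (mark (q_of w1))) -(setID w2 (mark (q_of w2)))
     (setIidPr sub1) (setIidPr sub2) eq_rest eq_q.
rewrite -card_draws -cardsX -(card_in_imset inj_g); apply: subset_leq_card.
apply/subsetP => _ /imsetP[w Ww ->].
have /and3P[Qq sub_w /eqP card_q] := goodW w Ww.
by rewrite in_setX Qq inE cardsD (setIidPr sub_w) card_q cardW /=.
Qed.

Lemma card_set5 (T : finType) (X Y : {set T}) x a b c d :
  x \notin X :|: Y -> [disjoint X & Y] ->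
  a \in X -> b \in X -> a != b -> c \in Y -> d \in Y -> c != d ->
  #|[set x; a; b; c; d]| = 5.
Proof.
move=> xXY dXY aX bX ab cY dY cd.
have sub_ab : [set a; b] \subset X by rewrite subUset !sub1set aX bX.
have sub_cd : [set c; d] \subset Y by rewrite subUset !sub1set cY dY.
have -> : [set x; a; b; c; d] = x |: ([set a; b] :|: [set c; d]).
  by apply/setP => e; rewrite !inE !orbA.
rewrite cardsU1 cardsU disjoint_setI0 ?cards0 ?cards2 ?ab ?cd.
  by rewrite (contra (subsetP (setUSS sub_ab sub_cd) x)).
exact: disjointWl sub_ab (disjointWr sub_cd dXY).
Qed.

Lemma setD3_bounds (T : finType) (u S : {set T}) x y z :
  y \in S -> z \in S ->
  u :\: (x |: S) \subset u :\: [set x; y; z] /\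
  u :\: [set x; y; z] \subset u :\ x.
Proof.
move=> yS zS; split; apply: setDS; last by rewrite sub1set !inE eqxx.
by rewrite !subUset !sub1set !inE eqxx yS zS !orbT.
Qed.

Lemma indep_meet_gt1 n (A : {set {set 'I_n}}) u w :
  independent_nr1 A -> u \in A -> w \in A -> u != w ->
  ~~ [disjoint u & w] -> 1 < #|u :&: w|.
Proof.
move=> indA uA wA uw; rewrite -setI_eq0 -card_gt0.
by have := indA _ _ uA wA uw; case: #|u :&: w| => [|[]].
Qed.

Lemma A1_disjoint_other n (A A0 : {set {set 'I_n}}) v a b :
  v \in A1 A A0 -> a \in A0 -> b \in A0 -> a != b ->
  ~~ [disjoint v & a] -> [disjoint v & b].
Proof.
rewrite inE => /andP[_ /cards1P[c met_v]] aA0 bA0 ab va.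
apply: contraR ab => vb.
have : a \in [set w in A0 | ~~ [disjoint v & w]] by rewrite inE aA0 va.
have : b \in [set w in A0 | ~~ [disjoint v & w]] by rewrite inE bA0 vb.
by rewrite met_v !inE => /eqP-> /eqP->.
Qed.

Definition mark5 (T : finType) (x : T) (q : T * T * T * T) : {set T} :=
  [set x; q.1.1.1; q.1.1.2; q.1.2; q.2].

Section Bset.

Variables (n : nat) (A A0 : {set {set 'I_n}}) (x : 'I_n).

Lemma mem_Bset v vk : v \in Bset A A0 x vk ->
  [/\ v \in A1 A A0, v \in A :\: A0, x \in v & ~~ [disjoint v & vk]].
Proof.
by case/setIdP => vA1 /andP[xv vvk]; split=> //; case/setIdP: vA1.
Qed.

Variables vi vj : {set 'I_n}.
Hypotheses (vi_A0 : vi \in A0) (vj_A0 : vj \in A0) (neq_ij : vi != vj).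

Lemma Bset_disjoint_vj u : u \in Bset A A0 x vi -> [disjoint u & vj].
Proof.
by case/mem_Bset => u_A1 _ _; apply: A1_disjoint_other u_A1 vi_A0 vj_A0 neq_ij.
Qed.

Lemma Bset_disjoint_vi w : w \in Bset A A0 x vj -> [disjoint w & vi].
Proof.
case/mem_Bset => w_A1 _ _.
by apply: A1_disjoint_other w_A1 vj_A0 vi_A0 _; rewrite eq_sym.
Qed.

Hypothesis indA : independent_nr1 A.

Lemma Bset_meet_outside w u :
  w \in Bset A A0 x vj -> u \in Bset A A0 x vi ->
  exists e, e \in w :&: (u :\: (x |: vi)).
Proof.
move=> wBj uBi; have w_vi := Bset_disjoint_vi wBj.
have [_ /setDP[wA _] xw _] := mem_Bset wBj.
have [_ /setDP[uA _] xu u_vi] := mem_Bset uBi.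
have wu : w != u by apply: contraNneq u_vi => <-.
have w_u : ~~ [disjoint w & u].
  by rewrite -setI_eq0; apply/set0Pn; exists x; rewrite inE xw xu.
have := indep_meet_gt1 indA wA uA wu w_u.
rewrite (cardsD1 x) !inE xw xu add1n ltnS => /card_gt0P[e].
rewrite !inE => /and3P[ex ew eu]; exists e.
by rewrite !inE ew eu (negbTE ex) (disjointFr w_vi ew).
Qed.

Hypotheses (A0_A : A0 \subset A) (x_I0 : x \notin I0 A0).

Lemma Bset_marked u1 u2 (F1 F2 : {set 'I_n}) :
  u1 \in Bset A A0 x vi -> u2 \in Bset A A0 x vi ->
  u1 :\: (x |: vi) \subset F1 -> F1 \subset u1 :\ x ->
  u2 :\: (x |: vi) \subset F2 -> F2 \subset u2 :\ x ->
  [disjoint F1 & F2] -> forall w, w \in Bset A A0 x vj ->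
  exists2 q, q \in setX (setX (setX vj vj) F1) F2 &
    (mark5 x q \subset w) && (#|mark5 x q| == 5).
Proof.
move=> u1B u2B lo1 hi1 lo2 hi2 F12 w wBj.
have [_ /setDP[wA wA0] xw w_vj] := mem_Bset wBj.
have wvj : w != vj by apply: contraNneq wA0 => ->.
have /card_gt1P[a [b [/setIP[aw avj] /setIP[bw bvj] ab]]] :=
  indep_meet_gt1 indA wA (subsetP A0_A _ vj_A0) wvj w_vj.
have [c /setIP[cw /(subsetP lo1) cF1]] := Bset_meet_outside wBj u1B.
have [d /setIP[dw /(subsetP lo2) dF2]] := Bset_meet_outside wBj u2B.
exists (a, b, c, d); first by rewrite !in_setX avj bvj cF1 dF2.
apply/andP; split; first by rewrite !subUset !sub1set xw aw bw cw dw.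
have F_sub : F1 :|: F2 \subset (u1 :|: u2) :\ x by rewrite setDUl setUSS.
have x_vj : x \notin vj := contra (subsetP (bigcup_sup _ vj_A0) x) x_I0.
have x_F : x \notin F1 :|: F2.
  by apply/negP => /(subsetP F_sub); rewrite !inE eqxx.
have vj_F : [disjoint vj & F1 :|: F2].
  rewrite disjoint_sym; apply: disjointWl F_sub _.
  apply: disjointWl (subsetDl _ _) _.
  by rewrite -setI_eq0 setIUl !disjoint_setI0 ?setU0 ?(Bset_disjoint_vj u1B)
     ?(Bset_disjoint_vj u2B).
have cY : c \in F1 :|: F2 by rewrite inE cF1.
have dY : d \in F1 :|: F2 by rewrite inE dF2 orbT.
have cd : c != d by apply: contraTneq dF2 => <-; rewrite (disjointFr F12 cF1).
by rewrite (card_set5 _ vj_F avj bvj ab cY dY cd) // inE negb_or x_vj.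
Qed.

End Bset.

Theorem lemma7 (n r : nat) (A A0 : {set {set 'I_n}}) (x : 'I_n)
    (vi vj : {set 'I_n}) :
  5 <= r ->
  r_uniform r A -> independent_nr1 A ->
  max_disjoint_subfamily A A0 ->
  x \notin I0 A0 -> ~ inP A A0 x ->
  vi \in A0 -> vj \in A0 -> vi != vj ->
  Bset A A0 x vi != set0 ->
  r ^ 5 * 'C(n, r - 5) <= #|Bset A A0 x vj| ->
  forall f : {set 'I_n} -> {set 'I_n},
    (forall v, v \in Bset A A0 x vi ->
       exists y z, [/\ y != z, y \in v :&: vi, z \in v :&: vi &
                       f v = v :\: [set x; y; z]]) ->
  forall u1 u2, u1 \in Bset A A0 x vi -> u2 \in Bset A A0 x vi ->
    f u1 :&: f u2 != set0.
Proof.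
move=> r_ge5 unifA indA [A0_A _ _] x_I0 _ vi_A0 vj_A0 neq_ij _ bigBj f f_def
  u1 u2 u1B u2B.
apply/negP => /eqP f12.
have card_B vk w : w \in Bset A A0 x vk -> #|w| = r.
  by case/mem_Bset => _ /setDP[wA _] _ _; apply: unifA.
have f_bounds u : u \in Bset A A0 x vi ->
    [/\ u :\: (x |: vi) \subset f u, f u \subset u :\ x & #|f u| <= r].
  move=> uB; have [y [z [_ /setIP[_ y_vi] /setIP[_ z_vi] ->]]] := f_def u uB.
  have [lo hi] := setD3_bounds u x y_vi z_vi.
  by rewrite -(card_B _ _ uB) subset_leq_card // (subset_trans hi) ?subsetDl.
have [lo1 hi1 le_f1] := f_bounds u1 u1B.
have [lo2 hi2 le_f2] := f_bounds u2 u2B.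
have f_disj : [disjoint f u1 & f u2] by rewrite -setI_eq0 f12.
have := card_le_marked (card_B vj) (Bset_marked vi_A0 vj_A0 neq_ij indA A0_A
  x_I0 u1B u2B lo1 hi1 lo2 hi2 f_disj).
have card_vj : #|vj| = r by apply/unifA/(subsetP A0_A).
have C_gt0 : 0 < 'C(n, r - 5).
  rewrite bin_gt0 (leq_trans (leq_subr 5 _)) // -(card_B _ _ u1B).
  by rewrite -[X in _ <= X](card_ord n) max_card.
rewrite card_ord !cardsX card_vj => /(leq_trans bigBj).
have le_r4 : r * r * #|f u1| * #|f u2| <= r ^ 4.
  by rewrite !expnS expn0 muln1 !mulnA !leq_mul.
move/leq_trans/(_ (leq_mul le_r4 (leqnn _))).
by rewrite leq_pmul2r // leqNgt ltn_exp2l // (leq_trans _ r_ge5).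
Qed.
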